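(* Let $X$ (features, taking values in $\mathcal{X}$) and $S$ (sensitive attribute, taking values in $\mathcal{S}\subset\{0,1\}^{d_s}$) be jointly distributed random variables. For an encoder $f:\mathcal{X}\to\mathcal{Z}$, let $Z=f(X)$ be the representation, and measure distortion by $d(X,\{Z,S\})=E[-\log p(x\mid z,s)]=H(X\mid Z,S)$. Define the unfairness-distortion function $$I(D)=\min_{f} I(Z,S)\ \text{ s.t. }\ H(X\mid Z,S)\le D,$$ and the rate-distortion function $$R(D)=\min_{f} I(X,Z)\ \text{ s.t. }\ H(X\mid Z,S)\le D.$$ Then $I(D)=R(D)+D-C$ if $\frac{\partial R}{\partial D}(D)\le -1$, and $I(D)=0$ otherwise, where $C=H(X\mid S)$ is a constant depending only on the data and not on $D$. Moreover, $I(D)$ is a non-increasing convex function of $D$.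
   Context: $I(\cdot,\cdot)$ denotes mutual information and $H(\cdot\mid\cdot)$ conditional entropy. The representation $Z$ is produced by the encoder from $X$ alone (so $Z$ is conditionally independent of $S$ given $X$); the minima are over encoders $f$. $R(D)$ is assumed differentiable where its derivative $\partial R/\partial D$ is used. *)

From HB Require Import structures.
From mathcomp Require Import all_boot all_order all_algebra.
From mathcomp Require Import all_classical all_reals all_analysis.
Set Implicit Arguments. Unset Strict Implicit. Unset Printing Implicit Defensive.
Import Order.TTheory GRing.Theory Num.Theory.
Local Open Scope ring_scope.
Local Open Scope classical_set_scope.

Section InfoDefs.
Variables (R : realType) (X S : finType).

(* Shannon entropy (in nats) of a nonnegative weight function on a finite type;
   convention 0 ln 0 = 0 holds since 0 * ln 0 = 0. *)
Definition ent (T : finType) (P : T -> R) : R := - \sum_(t : T) P t * ln (P t).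

(* a stochastic encoder X -> 'I_n : rows are probability vectors *)
Definition is_channel (n : nat) (q : X -> 'I_n -> R) : Prop :=
  (forall x z, 0 <= q x z) /\ (forall x, \sum_(z < n) q x z = 1).

Variable p : X -> S -> R.

Definition pXSZ n (q : X -> 'I_n -> R) (t : X * S * 'I_n) : R :=
  p t.1.1 t.1.2 * q t.1.1 t.2.
Definition pSZ n (q : X -> 'I_n -> R) (t : S * 'I_n) : R :=
  \sum_(x : X) p x t.1 * q x t.2.
Definition pXZ n (q : X -> 'I_n -> R) (t : X * 'I_n) : R :=
  \sum_(s : S) p t.1 s * q t.1 t.2.
Definition pZ n (q : X -> 'I_n -> R) (z : 'I_n) : R :=
  \sum_(x : X) \sum_(s : S) p x s * q x z.
Definition pS (s : S) : R := \sum_(x : X) p x s.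
Definition pX (x : X) : R := \sum_(s : S) p x s.
Definition pXS (t : X * S) : R := p t.1 t.2.

Definition condent_X_ZS n (q : X -> 'I_n -> R) : R :=
  ent (pXSZ q) - ent (pSZ q).
Definition MI_ZS n (q : X -> 'I_n -> R) : R :=
  ent (pZ q) + ent pS - ent (pSZ q).
Definition MI_XZ n (q : X -> 'I_n -> R) : R :=
  ent pX + ent (pZ q) - ent (pXZ q).

Definition Ccst : R := ent pXS - ent pS.

Definition feas_vals (obj : forall n, (X -> 'I_n -> R) -> R) (D : R) : set R :=
  [set v | exists n (q : X -> 'I_n -> R),
     is_channel q /\ condent_X_ZS q <= D /\ v = obj n q].

Definition IDfun (D : R) : R := inf (feas_vals MI_ZS D).
Definition RDfun (D : R) : R := inf (feas_vals MI_XZ D).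

End InfoDefs.

(* Since Z depends on S only through X, the chain rule gives, for every encoder,
   I(Z;S) = I(X;Z) + H(X|Z,S) - H(X|S).  Time-sharing between two encoders
   (the disjoint union of their output alphabets) is affine in I(Z;S), I(X;Z)
   and H(X|Z,S), so I(D) is convex, and it is non-increasing by definition.
   A constant encoder has distortion C = H(X|S) and no information, so
   I(D) = R(D) = 0 for D >= C.  For D <= C, mixing a feasible encoder with the
   constant one brings its distortion up to exactly D while scaling I(Z;S) down,
   whence I(D) = R(D) + D - C.  Thus R(D) + D = I(D) + C is non-increasing on
   (0, C), forcing R' <= -1 there, while R' = 0 beyond C. *)

From mathcomp Require Import all_boot all_order all_algebra.
From mathcomp Require Import all_classical all_reals all_analysis.
From mathcomp Require Import ring lra.
Import Order.TTheory GRing.Theory Num.Theory.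
Import numFieldNormedType.Exports.
Set Implicit Arguments. Unset Strict Implicit. Unset Printing Implicit Defensive.
Local Open Scope ring_scope.

Lemma nincr_derive1_le0 (R : realType) (f : R -> R) (a b x : R) :
  a < x -> x < b -> derivable f x 1 ->
  (forall u v, a < u -> u <= v -> v < b -> f v <= f u) -> derive1 f x <= 0.
Proof.
move=> ax xb df nf; rewrite derive1E; apply: limr_le; first exact: df.
have e0 : 0 < Num.min (x - a) (b - x) by rewrite lt_min !subr_gt0 ax xb.
near=> h.
have h0 : h != 0 by near: h; exact: nbhs_dnbhs_neq.
have : `|h| < Num.min (x - a) (b - x) by near: h; exact: dnbhs0_lt.
rewrite lt_min => /andP[hxa hbx].
change (h^-1 * (f (h * 1 + x) - f x) <= 0); rewrite mulr1.
move: h0; rewrite neq_lt => /orP[hn|hp].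
- rewrite nmulr_rle0 ?invr_lt0 // subr_ge0; apply: nf => //; last by lra.
  by move: hxa; rewrite ltr0_norm //; lra.
- rewrite pmulr_rle0 ?invr_gt0 // subr_le0; apply: nf => //; first by lra.
  by move: hbx; rewrite gtr0_norm //; lra.
Unshelve. all: end_near.
Qed.

Lemma derive1_near_cst (R : realType) (f : R -> R) (c x : R) :
  (\forall y \near x, f y = c) -> derive1 f x = 0.
Proof. by move=> fc; rewrite derive1E (near_eq_derive _ fc) derive_cst. Qed.

Section Entropy.
Variable R : realType.

Lemma ln_le_subr1 (x : R) : 0 < x -> ln x <= x - 1.
Proof. by move=> x0; have := @le_ln1Dx R (x - 1); rewrite addrCA subrr addr0; apply; lra. Qed.

Lemma mulr_lnM (a b : R) : 0 <= a -> 0 <= b ->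
  a * b * ln (a * b) = a * b * ln a + a * b * ln b.
Proof.
move=> a0 b0.
have [->|an] := eqVneq a 0; first by rewrite !mul0r addr0.
have [->|bn] := eqVneq b 0; first by rewrite !(mulr0, mul0r) addr0.
by rewrite lnM ?posrE ?lt0r ?an ?bn // mulrDr.
Qed.

Lemma eq_ent (T : finType) (f g : T -> R) : f =1 g -> ent f = ent g.
Proof. by move=> fg; rewrite /ent; under eq_bigr do rewrite fg. Qed.

Lemma ent_curry (A B : finType) (f : A * B -> R) :
  ent f = ent (fun u : A * B => f (u.1, u.2)).
Proof. by apply: eq_ent => -[]. Qed.

Lemma ent_uncurry (A B : finType) (F : A -> B -> R) :
  ent (fun u : A * B => F u.1 u.2) = \sum_a ent (F a).
Proof. by rewrite /ent sumrN -(pair_bigA _ (fun a b => F a b * ln (F a b))). Qed.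

Lemma ent_indicator (T : finType) (b : T -> bool) : ent (fun t => (b t)%:R : R) = 0.
Proof. by rewrite /ent big1 ?oppr0 // => t _; case: (b t); rewrite ?ln1 ?mulr0 ?mul0r. Qed.

Lemma ent_scale (T : finType) (a : R) (g : T -> R) : 0 <= a -> (forall t, 0 <= g t) ->
  ent (fun t => a * g t) = a * ent g - (\sum_t g t) * (a * ln a).
Proof.
move=> a0 g0; rewrite /ent.
under eq_bigr do rewrite mulr_lnM //.
rewrite big_split /= mulr_suml mulrN mulr_sumr opprD addrC; congr (_ - _).
  by congr (- _); apply: eq_bigr => t _; rewrite mulrA.
by apply: eq_bigr => t _; rewrite mulrCA mulrA.
Qed.

Lemma ent_split n1 n2 (f : 'I_(n1 + n2) -> R) :
  ent f = ent (fun i => f (lshift n2 i)) + ent (fun j => f (rshift n1 j)).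
Proof. by rewrite /ent big_split_ord opprD. Qed.

Definition mixfun n1 n2 (t : R) (g1 : 'I_n1 -> R) (g2 : 'I_n2 -> R)
    (z : 'I_(n1 + n2)) : R :=
  match fintype.split z with inl i => t * g1 i | inr j => (1 - t) * g2 j end.

Lemma mixfun_lshift n1 n2 t g1 g2 (i : 'I_n1) :
  @mixfun n1 n2 t g1 g2 (lshift n2 i) = t * g1 i.
Proof. by rewrite /mixfun (unsplitK (inl i)). Qed.

Lemma mixfun_rshift n1 n2 t g1 g2 (j : 'I_n2) :
  @mixfun n1 n2 t g1 g2 (rshift n1 j) = (1 - t) * g2 j.
Proof. by rewrite /mixfun (unsplitK (inr j)). Qed.

Lemma sum_mixfun n1 n2 t g1 g2 :
  \sum_z @mixfun n1 n2 t g1 g2 z = t * \sum_i g1 i + (1 - t) * \sum_j g2 j.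
Proof.
rewrite big_split_ord !mulr_sumr.
by congr (_ + _); apply: eq_bigr => i _; rewrite ?mixfun_lshift ?mixfun_rshift.
Qed.

Lemma ent_mixfun n1 n2 (t : R) (g1 : 'I_n1 -> R) (g2 : 'I_n2 -> R) :
  0 <= t <= 1 -> (forall i, 0 <= g1 i) -> (forall j, 0 <= g2 j) ->
  ent (mixfun t g1 g2) = t * ent g1 + (1 - t) * ent g2
     - (\sum_i g1 i) * (t * ln t) - (\sum_j g2 j) * ((1 - t) * ln (1 - t)).
Proof.
move=> /andP[t0 t1] g10 g20; rewrite ent_split.
rewrite (eq_ent (mixfun_lshift t g1 g2)) (eq_ent (mixfun_rshift t g1 g2)).
rewrite !ent_scale ?subr_ge0 //; ring.
Qed.

Definition binary_ent (t : R) : R := - (t * ln t) - (1 - t) * ln (1 - t).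

Lemma ent_mixfun_prob n1 n2 (t : R) (g1 : 'I_n1 -> R) (g2 : 'I_n2 -> R) :
  0 <= t <= 1 -> (forall i, 0 <= g1 i) -> (forall j, 0 <= g2 j) ->
  \sum_i g1 i = 1 -> \sum_j g2 j = 1 ->
  ent (mixfun t g1 g2) = t * ent g1 + (1 - t) * ent g2 + binary_ent t.
Proof. by move=> t01 g10 g20 g11 g21; rewrite ent_mixfun // g11 g21 /binary_ent; ring. Qed.

Lemma ent_uncurry_mixfun (A : finType) n1 n2 (t : R)
    (G1 : A -> 'I_n1 -> R) (G2 : A -> 'I_n2 -> R) : 0 <= t <= 1 ->
  (forall a i, 0 <= G1 a i) -> (forall a j, 0 <= G2 a j) ->
  \sum_a \sum_i G1 a i = 1 -> \sum_a \sum_j G2 a j = 1 ->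
  ent (fun u : A * 'I_(n1 + n2) => mixfun t (G1 u.1) (G2 u.1) u.2) =
    t * ent (fun u : A * 'I_n1 => G1 u.1 u.2)
    + (1 - t) * ent (fun u : A * 'I_n2 => G2 u.1 u.2) + binary_ent t.
Proof.
move=> t01 G10 G20 G11 G21.
rewrite (ent_uncurry (fun a => mixfun t (G1 a) (G2 a))) !ent_uncurry.
under eq_bigr do rewrite ent_mixfun //.
rewrite !sumrB big_split /= -!mulr_suml -!mulr_sumr G11 G21 /binary_ent; ring.
Qed.

Lemma gibbs_term_le (j u v : R) : 0 <= j -> j <= u -> j <= v ->
  j - u * v <= j * ln j - j * ln u - j * ln v.
Proof.
move=> j0 ju jv; have [->|jn] := eqVneq j 0.
  by rewrite !mul0r !subr0 sub0r oppr_le0 mulr_ge0 // (le_trans j0).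
have jp : 0 < j by rewrite lt0r jn.
have up : 0 < u by apply: lt_le_trans ju.
have vp : 0 < v by apply: lt_le_trans jv.
have := ln_le_subr1 (divr_gt0 (mulr_gt0 up vp) jp).
rewrite ln_div ?posrE ?mulr_gt0 // lnM ?posrE // => /(ler_wpM2l (ltW jp)).
have -> : j * (u * v / j - 1) = u * v - j by field; rewrite gt_eqF.
rewrite !mulrBr mulrDr; lra.
Qed.

Lemma ent_subadditive (A B : finType) (J : A -> B -> R) :
  (forall a b, 0 <= J a b) -> \sum_a \sum_b J a b = 1 ->
  ent (fun u : A * B => J u.1 u.2) <=
    ent (fun a => \sum_b J a b) + ent (fun b => \sum_a J a b).
Proof.
move=> J0 J1.
pose JA a := \sum_b J a b; pose JB b := \sum_a J a b.
have JA_ge a b : J a b <= JA a by rewrite /JA (bigD1 b) //= lerDl sumr_ge0.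
have JB_ge a b : J a b <= JB b by rewrite /JB (bigD1 a) //= lerDl sumr_ge0.
have mass0 : \sum_a \sum_b (J a b - JA a * JB b) = 0.
  under eq_bigr do rewrite sumrB -mulr_sumr.
  by rewrite sumrB -mulr_suml J1 /JB exchange_big /= J1 mulr1 subrr.
have gap : ent JA + ent JB - ent (fun u : A * B => J u.1 u.2) =
    \sum_a \sum_b (J a b * ln (J a b) - J a b * ln (JA a) - J a b * ln (JB b)).
  have -> : ent JA = - \sum_a \sum_b J a b * ln (JA a).
    by rewrite /ent; congr (- _); apply: eq_bigr => a _; exact: mulr_suml.
  have -> : ent JB = - \sum_a \sum_b J a b * ln (JB b).
    by rewrite /ent exchange_big; congr (- _); apply: eq_bigr => b _; exact: mulr_suml.
  rewrite ent_uncurry /ent sumrN.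
  under [RHS]eq_bigr do rewrite !sumrB.
  by rewrite !sumrB; lra.
change (ent (fun u : A * B => J u.1 u.2) <= ent JA + ent JB).
rewrite -subr_ge0 gap -{1}mass0; apply: ler_sum => a _; apply: ler_sum => b _.
have := gibbs_term_le (J0 a b) (JA_ge a b) (JB_ge a b); lra.
Qed.

End Entropy.

Section Encoders.
Variables (R : realType) (X S : finType) (p : X -> S -> R).
Hypotheses (p_ge0 : forall x s, 0 <= p x s) (p_sum1 : \sum_x \sum_s p x s = 1).

Definition condent_Z_X n (q : X -> 'I_n -> R) : R := \sum_x pX p x * ent (q x).

Section Channel.
Variables (n : nat) (q : X -> 'I_n -> R).
Hypothesis q_channel : is_channel q.

Let q_ge0 : forall x z, 0 <= q x z. Proof. by case: q_channel. Qed.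
Let q_sum1 : forall x, \sum_z q x z = 1. Proof. by case: q_channel. Qed.

Lemma sum_channel_scale (w : R) x : \sum_z w * q x z = w.
Proof. by rewrite -mulr_sumr q_sum1 mulr1. Qed.

Lemma pSZ_ge0 s z : 0 <= pSZ p q (s, z).
Proof. by apply: sumr_ge0 => x _; exact: mulr_ge0. Qed.

Lemma pXZ_ge0 x z : 0 <= pXZ p q (x, z).
Proof. by apply: sumr_ge0 => s _; exact: mulr_ge0. Qed.

Lemma pZ_ge0 z : 0 <= pZ p q z.
Proof. by do 2!(apply: sumr_ge0 => ? _); exact: mulr_ge0. Qed.

Lemma sum_pSZ : \sum_s \sum_z pSZ p q (s, z) = 1.
Proof.
rewrite -p_sum1 [RHS]exchange_big; apply: eq_bigr => s _.
by rewrite /pSZ /= exchange_big; apply: eq_bigr => x _; exact: sum_channel_scale.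
Qed.

Lemma sum_pXZ : \sum_x \sum_z pXZ p q (x, z) = 1.
Proof.
rewrite -p_sum1; apply: eq_bigr => x _.
by rewrite /pXZ /= exchange_big; apply: eq_bigr => s _; exact: sum_channel_scale.
Qed.

Lemma sum_pZ : \sum_z pZ p q z = 1.
Proof.
rewrite -p_sum1 /pZ exchange_big; apply: eq_bigr => x _.
by rewrite exchange_big; apply: eq_bigr => s _; exact: sum_channel_scale.
Qed.

Lemma ent_pXSZ : ent (pXSZ p q) = ent (pXS p) + condent_Z_X q.
Proof.
rewrite ent_curry (ent_uncurry (fun xs z => p xs.1 xs.2 * q xs.1 z)).
under eq_bigr do rewrite ent_scale // q_sum1 mul1r.
rewrite sumrB addrC; congr (_ + _).
rewrite -(pair_bigA _ (fun x s => p x s * ent (q x))) /=.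
by apply: eq_bigr => x _; rewrite /pX mulr_suml.
Qed.

Lemma ent_pXZ : ent (pXZ p q) = ent (pX p) + condent_Z_X q.
Proof.
have pX_ge0 x : 0 <= pX p x by apply: sumr_ge0 => s _.
rewrite ent_curry (eq_ent (g := fun u => pX p u.1 * q u.1 u.2)); last first.
  by move=> [x z]; rewrite /pXZ /pX /= mulr_suml.
rewrite (ent_uncurry (fun x z => pX p x * q x z)).
under eq_bigr do rewrite ent_scale // q_sum1 mul1r.
by rewrite sumrB addrC.
Qed.

Lemma MI_ZS_chain : MI_ZS p q = MI_XZ p q + condent_X_ZS p q - Ccst p.
Proof. by rewrite /MI_ZS /MI_XZ /condent_X_ZS /Ccst ent_pXSZ ent_pXZ; ring. Qed.

Lemma MI_ZS_ge0 : 0 <= MI_ZS p q.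
Proof.
have := ent_subadditive (fun s z => pSZ_ge0 s z) sum_pSZ.
rewrite -ent_curry (eq_ent (g := pS p)); last first.
  by move=> s; rewrite /pSZ /pS /= exchange_big; apply: eq_bigr => x _; exact: sum_channel_scale.
rewrite (eq_ent (g := pZ p q)); last by move=> z; rewrite /pSZ /pZ /= exchange_big.
by rewrite /MI_ZS; lra.
Qed.

Lemma MI_XZ_ge0 : 0 <= MI_XZ p q.
Proof.
have := ent_subadditive (fun x z => pXZ_ge0 x z) sum_pXZ.
rewrite -ent_curry (eq_ent (g := pX p)); last first.
  by move=> x; rewrite /pXZ /pX /= exchange_big; apply: eq_bigr => s _; exact: sum_channel_scale.
by rewrite /MI_XZ; lra.
Qed.

Lemma MI_XZ_E : MI_XZ p q = ent (pZ p q) - condent_Z_X q.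
Proof. by rewrite /MI_XZ ent_pXZ; ring. Qed.

Lemma condent_X_ZS_E : condent_X_ZS p q = ent (pXS p) + condent_Z_X q - ent (pSZ p q).
Proof. by rewrite /condent_X_ZS ent_pXSZ. Qed.

End Channel.

Definition det_channel n (f : X -> 'I_n) : X -> 'I_n -> R :=
  fun x z => (f x == z)%:R.

Lemma det_channelP n (f : X -> 'I_n) : is_channel (det_channel f).
Proof.
split=> [x z|x]; first by rewrite ler0n.
by rewrite /det_channel (bigD1 (f x)) //= eqxx big1 ?addr0 // => z; rewrite eq_sym => /negbTE ->.
Qed.

Lemma condent_Z_X_det n (f : X -> 'I_n) : condent_Z_X (det_channel f) = 0.
Proof. by rewrite /condent_Z_X big1 // => x _; rewrite ent_indicator mulr0. Qed.

Definition const_channel : X -> 'I_1 -> R := det_channel (fun _ => ord0).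
Definition id_channel : X -> 'I_#|X| -> R := det_channel enum_rank.

Lemma MI_XZ_const : MI_XZ p const_channel = 0.
Proof.
rewrite /const_channel (MI_XZ_E (det_channelP _)) condent_Z_X_det subr0 /ent big_ord1.
rewrite /pZ /det_channel eqxx.
by under eq_bigr do under eq_bigr do rewrite mulr1; rewrite p_sum1 ln1 mulr0 oppr0.
Qed.

Lemma condent_const : condent_X_ZS p const_channel = Ccst p.
Proof.
rewrite /const_channel (condent_X_ZS_E (det_channelP _)) condent_Z_X_det addr0 /Ccst.
congr (_ - _); rewrite ent_curry (ent_uncurry (fun s z => pSZ p _ (s, z))) /ent -sumrN.
apply: eq_bigr => s _; rewrite big_ord1.
by rewrite /pSZ /det_channel eqxx /=; under eq_bigr do rewrite mulr1.
Qed.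

Lemma condent_id : condent_X_ZS p id_channel = 0.
Proof.
rewrite /id_channel (condent_X_ZS_E (det_channelP _)) condent_Z_X_det addr0.
apply/eqP; rewrite subr_eq0; apply/eqP.
rewrite [ent (pSZ _ _)]ent_curry (eq_ent (g := fun u => p (enum_val u.2) u.1)); last first.
  move=> [s z]; rewrite /pSZ /det_channel /= (bigD1 (enum_val z)) //=.
  rewrite enum_valK eqxx mulr1 big1 ?addr0 // => x /negbTE.
  by rewrite -(inj_eq enum_rank_inj) enum_valK => ->; rewrite mulr0.
rewrite (ent_uncurry (fun s z => p (enum_val z) s)) /pXS (ent_uncurry p) /ent !sumrN.
rewrite exchange_big; congr (- _); apply: eq_bigr => s _.
by rewrite (reindex (@enum_val X X)) //=; exists enum_rank => [x|z] _; rewrite ?enum_rankK ?enum_valK.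
Qed.

Definition mix_channel n1 n2 (t : R) (q1 : X -> 'I_n1 -> R) (q2 : X -> 'I_n2 -> R) :
  X -> 'I_(n1 + n2) -> R := fun x => mixfun t (q1 x) (q2 x).

Section Mix.
Variables (n1 n2 : nat) (t : R) (q1 : X -> 'I_n1 -> R) (q2 : X -> 'I_n2 -> R).
Hypotheses (t01 : 0 <= t <= 1) (q1_channel : is_channel q1) (q2_channel : is_channel q2).

Let q := mix_channel t q1 q2.

Lemma mix_channelP : is_channel q.
Proof.
case/andP: t01 => t0 t1; case: q1_channel => q10 q11; case: q2_channel => q20 q21.
split=> [x z|x]; last by rewrite /q sum_mixfun q11 q21 !mulr1 subrKC.
by rewrite /q /mix_channel /mixfun; case: fintype.split => i; rewrite mulr_ge0 ?subr_ge0.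
Qed.

Lemma condent_Z_X_mix :
  condent_Z_X q = t * condent_Z_X q1 + (1 - t) * condent_Z_X q2 + binary_ent t.
Proof.
case: q1_channel => q10 q11; case: q2_channel => q20 q21.
rewrite /condent_Z_X; under eq_bigr do rewrite ent_mixfun_prob //.
have mass : binary_ent t = \sum_x pX p x * binary_ent t.
  by rewrite -mulr_suml p_sum1 mul1r.
by rewrite [X in _ = _ + X]mass !mulr_sumr -!big_split; apply: eq_bigr => x _ /=; ring.
Qed.

Lemma ent_pZ_mix :
  ent (pZ p q) = t * ent (pZ p q1) + (1 - t) * ent (pZ p q2) + binary_ent t.
Proof.
rewrite -ent_mixfun_prob ?(sum_pZ q1_channel) ?(sum_pZ q2_channel) //; last first.
- exact: pZ_ge0 q2_channel.
- exact: pZ_ge0 q1_channel.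
apply: eq_ent => z; rewrite /pZ /q /mix_channel /mixfun.
by case: fintype.split => i; rewrite mulr_sumr; apply: eq_bigr => x _;
  rewrite mulr_sumr; apply: eq_bigr => s _; rewrite mulrCA.
Qed.

Lemma ent_pSZ_mix :
  ent (pSZ p q) = t * ent (pSZ p q1) + (1 - t) * ent (pSZ p q2) + binary_ent t.
Proof.
rewrite ![ent (pSZ p _)]ent_curry.
rewrite -(ent_uncurry_mixfun (G1 := fun s z => pSZ p q1 (s, z)) (G2 := fun s z => pSZ p q2 (s, z)))
  ?(sum_pSZ q1_channel) ?(sum_pSZ q2_channel) //; last first.
- exact: pSZ_ge0 q2_channel.
- exact: pSZ_ge0 q1_channel.
apply: eq_ent => -[s z]; rewrite /pSZ /q /mix_channel /mixfun /=.
by case: fintype.split => i; rewrite mulr_sumr; apply: eq_bigr => x _; rewrite mulrCA.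
Qed.

Lemma MI_XZ_mix : MI_XZ p q = t * MI_XZ p q1 + (1 - t) * MI_XZ p q2.
Proof. by rewrite !(MI_XZ_E mix_channelP, MI_XZ_E q1_channel, MI_XZ_E q2_channel) ent_pZ_mix condent_Z_X_mix; ring. Qed.

Lemma condent_mix : condent_X_ZS p q = t * condent_X_ZS p q1 + (1 - t) * condent_X_ZS p q2.
Proof. by rewrite !(condent_X_ZS_E mix_channelP, condent_X_ZS_E q1_channel, condent_X_ZS_E q2_channel) ent_pSZ_mix condent_Z_X_mix; ring. Qed.

Lemma MI_ZS_mix : MI_ZS p q = t * MI_ZS p q1 + (1 - t) * MI_ZS p q2.
Proof. by rewrite !(MI_ZS_chain mix_channelP, MI_ZS_chain q1_channel, MI_ZS_chain q2_channel) MI_XZ_mix condent_mix; ring. Qed.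

End Mix.

Section Objective.
Variable obj : forall n, (X -> 'I_n -> R) -> R.
Hypothesis obj_ge0 : forall n (q : X -> 'I_n -> R), is_channel q -> 0 <= obj q.

Lemma feas_vals_lbound D : has_lbound (feas_vals p obj D).
Proof. by exists 0 => _ [n [q [q_channel [_ ->]]]]; exact: obj_ge0. Qed.

Lemma feas_vals_nonempty D : 0 <= D -> nonempty (feas_vals p obj D).
Proof.
move=> D0; exists (obj id_channel), #|X|, id_channel.
by rewrite condent_id //; split=> //; exact: det_channelP.
Qed.

Lemma inf_feas_le D n (q : X -> 'I_n -> R) : is_channel q -> condent_X_ZS p q <= D ->
  inf (feas_vals p obj D) <= obj q.
Proof. by move=> q_channel qD; apply: (ge_inf (feas_vals_lbound D)); exists n, q. Qed.

Lemma inf_feas_ge D m : 0 <= D ->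
  (forall n (q : X -> 'I_n -> R), is_channel q -> condent_X_ZS p q <= D -> m <= obj q) ->
  m <= inf (feas_vals p obj D).
Proof.
move=> D0 lb; apply: lb_le_inf; first exact: feas_vals_nonempty.
by move=> _ [n [q [q_channel [qD ->]]]]; exact: lb.
Qed.

Lemma inf_feas_approx D e : 0 <= D -> 0 < e -> exists n (q : X -> 'I_n -> R),
  [/\ is_channel q, condent_X_ZS p q <= D & obj q < inf (feas_vals p obj D) + e].
Proof.
move=> D0 e0.
have [_ [n [q [q_channel [qD ->]]]] close] :=
  inf_adherent e0 (conj (feas_vals_nonempty D0) (feas_vals_lbound D)).
by exists n, q.
Qed.

Lemma inf_feas_nonincreasing D1 D2 : 0 <= D1 -> D1 <= D2 ->
  inf (feas_vals p obj D2) <= inf (feas_vals p obj D1).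
Proof.
move=> D10 D12; apply: inf_feas_ge => // n q q_channel qD.
exact: inf_feas_le q_channel (le_trans qD D12).
Qed.

Lemma inf_feas_convex D1 D2 t :
  (forall n1 n2 (q1 : X -> 'I_n1 -> R) (q2 : X -> 'I_n2 -> R), 0 <= t <= 1 ->
     is_channel q1 -> is_channel q2 ->
     obj (mix_channel t q1 q2) = t * obj q1 + (1 - t) * obj q2) ->
  0 <= D1 -> 0 <= D2 -> 0 <= t <= 1 ->
  inf (feas_vals p obj (t * D1 + (1 - t) * D2)) <=
    t * inf (feas_vals p obj D1) + (1 - t) * inf (feas_vals p obj D2).
Proof.
move=> obj_mix D10 D20 t01; have /andP[t0 t1] := t01.
apply/ler_addgt0Pr => e e0.
have [n1 [q1 [q1_channel q1D close1]]] := inf_feas_approx D10 e0.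
have [n2 [q2 [q2_channel q2D close2]]] := inf_feas_approx D20 e0.
apply: le_trans (inf_feas_le (mix_channelP t01 q1_channel q2_channel) _) _.
  rewrite condent_mix //; apply: lerD; apply: ler_wpM2l => //; lra.
rewrite obj_mix //.
have := ler_wpM2l t0 (ltW close1).
have := ler_wpM2l (_ : 0 <= 1 - t) (ltW close2); rewrite subr_ge0 => /(_ t1).
lra.
Qed.

Lemma inf_feas_eq0 D : obj const_channel = 0 -> 0 <= D -> Ccst p <= D ->
  inf (feas_vals p obj D) = 0.
Proof.
move=> obj_const D0 CD; apply/eqP; rewrite eq_le; apply/andP; split.
  by rewrite -obj_const inf_feas_le ?condent_const //; exact: det_channelP.
by apply: inf_feas_ge => // n q q_channel _; exact: obj_ge0.
Qed.

End Objective.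

Lemma MI_ZS_const : MI_ZS p const_channel = 0.
Proof.
rewrite (MI_ZS_chain (det_channelP _)) MI_XZ_const // condent_const //.
by rewrite add0r subrr.
Qed.

(* Time-sharing q with the constant encoder makes the distortion exactly D; the
   mixture is then feasible for R(D), and its I(Z;S) is t times that of q. *)
Lemma RDfun_le_MI_ZS D n (q : X -> 'I_n -> R) : is_channel q ->
  condent_X_ZS p q <= D -> D <= Ccst p -> RDfun p D + D - Ccst p <= MI_ZS p q.
Proof.
move=> q_channel qD DC; have RD_le := inf_feas_le MI_XZ_ge0 (D := D).
have [dC|dltC] := eqVneq (condent_X_ZS p q) (Ccst p).
  by have := RD_le _ _ q_channel qD; rewrite (MI_ZS_chain q_channel); lra.
have {}dltC : condent_X_ZS p q < Ccst p by rewrite lt_neqAle dltC (le_trans qD DC).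
pose t := (Ccst p - D) / (Ccst p - condent_X_ZS p q).
have t01 : 0 <= t <= 1.
  by rewrite divr_ge0 ?subr_ge0 ?(ltW dltC) //= ler_pdivrMr ?subr_gt0 // mul1r lerB.
have tE : t * (Ccst p - condent_X_ZS p q) = Ccst p - D.
  by rewrite /t divfK // subr_eq0 gt_eqF.
pose r := mix_channel t q const_channel.
have r_channel : is_channel r := mix_channelP t01 q_channel (det_channelP _).
have rD : condent_X_ZS p r = D.
  rewrite condent_mix //; last exact: det_channelP.
  by rewrite condent_const //; lra.
have RD_r : RDfun p D <= MI_XZ p r by apply: RD_le r_channel _; rewrite rD.
have MI_ZS_r : MI_ZS p r = t * MI_ZS p q.
  rewrite MI_ZS_mix //; last exact: det_channelP.
  by rewrite MI_ZS_const mulr0 addr0.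
have := MI_ZS_chain r_channel; rewrite rD MI_ZS_r => chain_r.
have := MI_ZS_ge0 q_channel; case/andP: t01 => t0 t1.
nra.
Qed.

Lemma IDfun_RDfun D : 0 <= D -> D <= Ccst p -> IDfun p D = RDfun p D + D - Ccst p.
Proof.
move=> D0 DC; apply/eqP; rewrite eq_le; apply/andP; split.
  apply/ler_addgt0Pr => e e0.
  have [n [q [q_channel qD close]]] := inf_feas_approx MI_XZ_ge0 D0 e0.
  have := inf_feas_le MI_ZS_ge0 q_channel qD.
  by rewrite (MI_ZS_chain q_channel) /IDfun; lra.
by apply: inf_feas_ge => // n q q_channel qD; exact: RDfun_le_MI_ZS.
Qed.

Lemma IDfun_nonincreasing D1 D2 : 0 <= D1 -> D1 <= D2 -> IDfun p D2 <= IDfun p D1.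
Proof. exact: (inf_feas_nonincreasing MI_ZS_ge0). Qed.

Lemma IDfun_convex D1 D2 t : 0 <= D1 -> 0 <= D2 -> 0 <= t <= 1 ->
  IDfun p (t * D1 + (1 - t) * D2) <= t * IDfun p D1 + (1 - t) * IDfun p D2.
Proof. by apply: (inf_feas_convex MI_ZS_ge0) => n1 n2 q1 q2; exact: MI_ZS_mix. Qed.

Lemma IDfun_eq0 D : 0 <= D -> Ccst p <= D -> IDfun p D = 0.
Proof. exact: (inf_feas_eq0 MI_ZS_ge0 MI_ZS_const). Qed.

Lemma RDfun_eq0 D : 0 <= D -> Ccst p <= D -> RDfun p D = 0.
Proof. exact: (inf_feas_eq0 MI_XZ_ge0 MI_XZ_const). Qed.

Lemma RDfun_derive1_le D : 0 < D -> D < Ccst p -> derivable (RDfun p) D 1 ->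
  derive1 (RDfun p) D <= -1.
Proof.
move=> D0 DC dR; have did := @derivable_id _ R D 1.
have : derive1 (RDfun p + id) D <= 0.
  apply: (nincr_derive1_le0 D0 DC); first exact: derivableD.
  move=> u v u0 uv vC; change (RDfun p v + v <= RDfun p u + u).
  have := IDfun_RDfun (ltW u0) (ltW (le_lt_trans uv vC)).
  have := IDfun_RDfun (ltW (lt_le_trans u0 uv)) (ltW vC).
  have := inf_feas_nonincreasing MI_ZS_ge0 (ltW u0) uv.
  rewrite /IDfun; lra.
by rewrite derive1E deriveD // derive_id -derive1E; lra.
Qed.

Lemma RDfun_derive1_eq0 D : 0 < D -> Ccst p < D -> derive1 (RDfun p) D = 0.
Proof.
move=> D0 CD; apply: derive1_near_cst; near=> y.
by apply: RDfun_eq0; apply: ltW; near: y; exact: lt_nbhsr.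
Unshelve. all: end_near.
Qed.

End Encoders.

Unset Implicit Arguments.

Theorem theorem2p1 (R : realType) (X : finType) (ds : nat)
    (p : X -> ds.-tuple bool -> R)
    (hp0 : forall x s, 0 <= p x s)
    (hp1 : \sum_(x : X) \sum_(s : ds.-tuple bool) p x s = 1) :
  (forall D : R, 0 < D -> derivable (RDfun p) D 1 ->
     (derive1 (RDfun p) D <= -1 -> IDfun p D = RDfun p D + D - Ccst p) /\
     (-1 < derive1 (RDfun p) D -> IDfun p D = 0)) /\
  (forall D1 D2 : R, 0 <= D1 -> D1 <= D2 -> IDfun p D2 <= IDfun p D1) /\
  (forall D1 D2 t : R, 0 <= D1 -> 0 <= D2 -> 0 <= t -> t <= 1 ->
     IDfun p (t * D1 + (1 - t) * D2) <= t * IDfun p D1 + (1 - t) * IDfun p D2).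
Proof.
split; [|split].
- move=> D D0 dR; have [DltC|CltD|DeqC] := ltgtP D (Ccst p).
  + split=> [_|slope]; first exact: (IDfun_RDfun hp0 hp1 (ltW D0) (ltW DltC)).
    by have := RDfun_derive1_le hp0 hp1 D0 DltC dR; lra.
  + split=> [slope|_]; last exact: (IDfun_eq0 hp0 hp1 (ltW D0) (ltW CltD)).
    by have := RDfun_derive1_eq0 hp0 hp1 D0 CltD; lra.
  + split=> _; first by rewrite (IDfun_RDfun hp0 hp1 (ltW D0)) ?DeqC.
    by rewrite (IDfun_eq0 hp0 hp1 (ltW D0)) ?DeqC.
- exact: (IDfun_nonincreasing hp0 hp1).
- by move=> D1 D2 t D10 D20 t0 t1; apply: (IDfun_convex hp0 hp1); rewrite ?t0.
Qed.
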